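(* The edge topology is not symmetric in general: there exist a scene (number of agents $N_a\ge 2$, horizon $T_f\ge 2$, current poses $(p_n,\theta_n)\in\mathbb{R}^2\times\mathbb{R}$ and future trajectories $Y_n=(y_n^1,\dots,y_n^{T_f})$, $y_n^t\in\mathbb{R}^2$) and indices $i\neq j$ such that $e_{ij}\neq e_{ji}$, where $e_{ij}$ is defined as in the context.
   Context: For $\alpha\in\mathbb{R}$, $R(\alpha)$ denotes the $2\times 2$ counterclockwise rotation matrix by angle $\alpha$. The local coordinate map of agent $n$ is $f^n(y)=R(-\theta_n)(y-p_n)$ for $y\in\mathbb{R}^2$, and the lateral coordinate $\ell^n(y)$ is the second component of $f^n(y)$. For agents $i,j$, an observer agent $n$, and a step $t\in\{2,\dots,T_f\}$, the intertwine indicator $I^{(n)}_t(i,j)$ equals $1$ if the closed line segment in $\mathbb{R}^2$ from $(t-1,\ell^n(y_i^{t-1}))$ to $(t,\ell^n(y_i^{t}))$ intersects the closed line segment from $(t-1,\ell^n(y_j^{t-1}))$ to $(t,\ell^n(y_j^{t}))$, and $0$ otherwise. The edge topology is $e_{ij}=\max_{2\le t\le T_f} I^{(i)}_t(i,j)\in\{0,1\}$, i.e. the interaction of agent $j$ with agent $i$ is assessed in agent $i$'s local frame. *)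

From Stdlib Require Import Reals List Arith ClassicalEpsilon.
Open Scope R_scope.

Definition pt := (R * R)%type.

Definition rot (alpha : R) (v : pt) : pt :=
  (cos alpha * fst v - sin alpha * snd v, sin alpha * fst v + cos alpha * snd v).

Definition local_coord (p : pt) (theta : R) (y : pt) : pt :=
  rot (- theta) (fst y - fst p, snd y - snd p).

Definition lateral (p : pt) (theta : R) (y : pt) : R := snd (local_coord p theta y).

Definition segments_intersect (a b c d : pt) : Prop :=
  exists s u : R, 0 <= s <= 1 /\ 0 <= u <= 1 /\
    (1 - s) * fst a + s * fst b = (1 - u) * fst c + u * fst d /\
    (1 - s) * snd a + s * snd b = (1 - u) * snd c + u * snd d.

Definition indic (P : Prop) : nat :=
  if excluded_middle_informative P then 1%nat else 0%nat.

(* A scene: poses p n, theta n, and trajectories y n t (agent n, step t, t = 1..Tf). *)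
Definition intertwine (p : nat -> pt) (theta : nat -> R) (y : nat -> nat -> pt)
  (n i j t : nat) : nat :=
  let l := fun z => lateral (p n) (theta n) z in
  indic (segments_intersect
           (INR (t - 1), l (y i (t - 1)%nat)) (INR t, l (y i t))
           (INR (t - 1), l (y j (t - 1)%nat)) (INR t, l (y j t))).

Definition edge (Tf : nat) (p : nat -> pt) (theta : nat -> R) (y : nat -> nat -> pt)
  (i j : nat) : nat :=
  fold_right Nat.max 0%nat (map (fun t => intertwine p theta y i i j t) (seq 2 (Tf - 1))).

(* Agent 0 stands still at the origin facing the x-axis; agent 1 sits at the
   origin facing the y-axis and moves from (1,-1) to (1,1).  Laterally, agent 0
   measures y-coordinates, so it sees agent 1 cross its own track (e_01 = 1);
   agent 1 measures minus x-coordinates, so it sees agent 0 on a parallel,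
   disjoint track (e_10 = 0). *)
From Stdlib Require Import Reals List Arith Lra Lia ClassicalEpsilon.
Open Scope R_scope.

Lemma indic_true (P : Prop) : P -> indic P = 1%nat.
Proof. intro HP; unfold indic; destruct (excluded_middle_informative P); tauto. Qed.

Lemma indic_false (P : Prop) : ~ P -> indic P = 0%nat.
Proof. intro HP; unfold indic; destruct (excluded_middle_informative P); tauto. Qed.

Lemma lateral_heading_0 (p z : pt) : lateral p 0 z = snd z - snd p.
Proof. unfold lateral, local_coord, rot; simpl. rewrite Ropp_0, cos_0, sin_0. ring. Qed.

Lemma lateral_heading_PI2 (p z : pt) : lateral p (PI / 2) z = fst p - fst z.
Proof.
  unfold lateral, local_coord, rot; simpl.
  rewrite sin_neg, cos_neg, sin_PI2, cos_PI2. ring.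
Qed.

Lemma segments_intersect_crossing (x0 x1 a b : R) :
  a < 0 < b -> segments_intersect (x0, 0) (x1, 0) (x0, a) (x1, b).
Proof.
  intros [Ha Hb].
  set (u := a / (a - b)).
  assert (Hu : u * (a - b) = a) by (unfold u; field; lra).
  assert (Hu01 : 0 <= u <= 1) by (split; nra).
  exists u, u; simpl; repeat split; try lra; nra.
Qed.

Lemma segments_intersect_parallel (x0 x1 c d : R) :
  segments_intersect (x0, c) (x1, c) (x0, d) (x1, d) -> c = d.
Proof. intros (s & u & _ & _ & _ & Hy); simpl in Hy; lra. Qed.

Lemma edge_horizon_2 (p : nat -> pt) (theta : nat -> R) (y : nat -> nat -> pt) (i j : nat) :
  edge 2 p theta y i j = intertwine p theta y i i j 2.
Proof. unfold edge; simpl. apply Nat.max_0_r. Qed.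

Definition scene_pos (n : nat) : pt := (0, 0).

Definition scene_heading (n : nat) : R := match n with 0%nat => 0 | _ => PI / 2 end.

Definition scene_traj (n t : nat) : pt :=
  match n, t with
  | 0%nat, _ => (0, 0)
  | _, 1%nat => (1, -1)
  | _, _ => (1, 1)
  end.

Lemma scene_edge_01 : edge 2 scene_pos scene_heading scene_traj 0 1 = 1%nat.
Proof.
  rewrite edge_horizon_2; unfold intertwine; simpl.
  rewrite !lateral_heading_0; simpl.
  apply indic_true.
  rewrite !Rminus_0_r.
  apply segments_intersect_crossing; lra.
Qed.

Lemma scene_edge_10 : edge 2 scene_pos scene_heading scene_traj 1 0 = 0%nat.
Proof.
  rewrite edge_horizon_2; unfold intertwine; simpl.
  rewrite !lateral_heading_PI2; simpl.
  apply indic_false; intro Hcross.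
  apply segments_intersect_parallel in Hcross; lra.
Qed.

Theorem theorem3 :
  exists (Na Tf : nat) (p : nat -> pt) (theta : nat -> R) (y : nat -> nat -> pt) (i j : nat),
    (2 <= Na)%nat /\ (2 <= Tf)%nat /\ (i < Na)%nat /\ (j < Na)%nat /\ i <> j /\
    edge Tf p theta y i j <> edge Tf p theta y j i.
Proof.
  exists 2%nat, 2%nat, scene_pos, scene_heading, scene_traj, 0%nat, 1%nat.
  rewrite scene_edge_01, scene_edge_10.
  repeat split; lia.
Qed.
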